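(* Let $\mathcal{X}=\{x_1,\dots,x_N\}$ and $\mathcal{Y}=\{y_1,\dots,y_M\}$ be finite alphabets, $P_X$ a probability mass function on $\mathcal{X}$ with full support, and $U=(u_{ij})$ an $N\times M$ matrix whose $i$-th row is a permutation of $\{1,\dots,M\}$. Fix $h^*\in\{1,\dots,M\}$ and let $\mathcal{Y}^+(h^* )=\{y_j\in\mathcal{Y}:\exists i\in\{1,\dots,N\},\ u_{ij}\ge h^*\}$. Consider the optimization problem $$\min_{P_{Y|X}}\ \max_{y\in\mathcal{S}_Y}\ \ell_{P_{Y|X}\times P_X}(X\to y)$$ over all mechanisms $P_{Y|X}=(p_{ij})$ satisfying $p_{ij}=0$ whenever $u_{ij}<h^*$, together with the additional constraint $\mathcal{S}_Y=\mathcal{Y}^+(h^* )$. Then the mechanism $M^*(h^* )$ defined by $$[M^*(h^* )]_{ij}=\begin{cases}0 & \text{if } u_{ij}<h^*,\\ \frac{1}{M-h^*+1} & \text{otherwise},\end{cases}$$ is an optimal solution of this problem.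
   Context: A privacy mechanism is a conditional distribution $P_{Y|X}$, written as an $N\times M$ row-stochastic matrix with $p_{ij}=P_{Y|X=x_i}(y_j)$. With $P_Y(y)=\sum_x P_X(x)P_{Y|X=x}(y)$, the output support is $\mathcal{S}_Y=\{y\in\mathcal{Y}:P_Y(y)>0\}$ and $P_{X|Y=y}(x)=P_{Y|X=x}(y)P_X(x)/P_Y(y)$. The pointwise maximal leakage (PML) of $y\in\mathcal{S}_Y$ is $\ell_{P_{Y|X}\times P_X}(X\to y)=\log\max_{x\in\mathcal{X}}\frac{P_{X|Y=y}(x)}{P_X(x)}$. The entry $u_{ij}=k$ means that the pair $(x_i,y_j)$ yields the $k$-th lowest utility value for input $x_i$ (all utility values for a given input are distinct). *)

From HB Require Import structures.
From mathcomp Require Import all_boot all_order all_algebra.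
From mathcomp Require Import reals exp.
Set Implicit Arguments. Unset Strict Implicit. Unset Printing Implicit Defensive.
Import Order.TTheory GRing.Theory Num.Theory.
Local Open Scope ring_scope.

Section PML.
Variables (R : realType) (N M : nat).
(* Input alphabet X = 'I_N (x_i), output alphabet Y = 'I_M (y_j). *)
Variable PX : 'I_N -> R.

Definition full_support_pmf := (forall i, 0 < PX i) /\ \sum_i PX i = 1.

(* a privacy mechanism: row-stochastic N x M matrix p_ij = P_{Y|X=x_i}(y_j) *)
Definition mechanism (P : 'I_N -> 'I_M -> R) :=
  (forall i j, 0 <= P i j) /\ (forall i, \sum_j P i j = 1).

Definition PY (P : 'I_N -> 'I_M -> R) (j : 'I_M) : R := \sum_i PX i * P i j.

Definition supportY (P : 'I_N -> 'I_M -> R) : {set 'I_M} :=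
  [set j | 0 < PY P j].

Definition posterior (P : 'I_N -> 'I_M -> R) (i : 'I_N) (j : 'I_M) : R :=
  P i j * PX i / PY P j.

(* pointwise maximal leakage  l(X -> y_j) = log max_x P_{X|Y=y}(x)/P_X(x)
   (the ratios are nonnegative and N > 0, so 0 is a neutral start value) *)
Definition PML (P : 'I_N -> 'I_M -> R) (j : 'I_M) : R :=
  ln (\big[Num.max/0]_i (posterior P i j / PX i)).

(* objective: max_{y in S_Y} PML (PML >= 0 on S_Y, so 0 is neutral) *)
Definition max_PML (P : 'I_N -> 'I_M -> R) : R :=
  \big[Num.max/0]_(j in supportY P) PML P j.

Variables (U : 'I_N -> 'I_M -> nat) (h : nat).

Definition Yplus : {set 'I_M} := [set j | [exists i, (h <= U i j)%N]].

Definition feasible (P : 'I_N -> 'I_M -> R) :=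
  [/\ mechanism P,
      (forall i j, (U i j < h)%N -> P i j = 0) &
      supportY P = Yplus].

Definition Mstar (i : 'I_N) (j : 'I_M) : R :=
  if (U i j < h)%N then 0 else ((M - h + 1)%:R)^-1.

End PML.

Definition utility_rows_perm (N M : nat) (U : 'I_N -> 'I_M -> nat) :=
  forall i : 'I_N, perm_eq [seq U i j | j <- enum 'I_M] (iota 1 M).

(* For an output y_j let A_j be the set of inputs for which y_j reaches utility level h, and
   S_j = P_X(A_j).  Under M* every y_j in Y^+ has P_Y(y_j) = S_j / (M-h+1) and posterior
   ratio 1/S_j on A_j (0 elsewhere), so its leakage is -log S_j.  For any feasible mechanism
   the ratios P(y_j|x_i)/P_Y(y_j) average to 1 under P_X and vanish off A_j, so their
   maximum is at least 1/S_j.  Since both mechanisms have support Y^+, M* is optimal. *)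

From HB Require Import structures.
From mathcomp Require Import all_boot all_order all_algebra.
From mathcomp Require Import reals exp.
From mathcomp Require Import zify.
Set Implicit Arguments. Unset Strict Implicit. Unset Printing Implicit Defensive.
Import Order.TTheory GRing.Theory Num.Theory.
Local Open Scope ring_scope.

Lemma count_iota_geq (h m n : nat) : (m <= h <= m + n)%N ->
  count (leq h) (iota m n) = (m + n - h)%N.
Proof.
move=> /andP[mh hmn].
have -> : n = (h - m + (m + n - h))%N by lia.
rewrite iotaD count_cat subnKC //.
have -> : count (leq h) (iota m (h - m)) = 0%N.
  apply/eqP; rewrite -leqn0 leqNgt -has_count; apply/hasPn => x.
  by rewrite mem_iota subnKC // => /andP[_]; rewrite ltnNge.
rewrite (eq_in_count (a2 := predT)) ?count_predT ?size_iota; first lia.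
by move=> x; rewrite mem_iota => /andP[].
Qed.

Lemma card_preim_perm (T : finType) (a : pred nat) (f : T -> nat) (s : seq nat) :
  perm_eq [seq f x | x <- enum T] s -> #|[pred x | a (f x)]| = count a s.
Proof.
move=> /permP <-; rewrite count_map cardE /enum_mem size_filter count_filter.
by apply: eq_count => x /=; rewrite andbT.
Qed.

Lemma sum_mul_le_mass_bigmax (R : realDomainType) (I : finType) (A : pred I)
    (w q : I -> R) :
  (forall i, 0 <= w i) -> (forall i, ~~ A i -> q i = 0) ->
  \sum_i w i * q i <= (\sum_(i | A i) w i) * \big[Num.max/0]_i q i.
Proof.
move=> w_ge0 q0; rewrite mulr_suml [leRHS]big_mkcond /=; apply: ler_sum => i _.
case: (boolP (A i)) => Ai; first by rewrite ler_wpM2l // le_bigmax.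
by rewrite q0 // mulr0.
Qed.

Section OptimalMechanism.

Variables (R : realType) (N M : nat) (PX : 'I_N -> R).
Variables (U : 'I_N -> 'I_M -> nat) (h : nat).
Hypothesis PX_gt0 : forall i, 0 < PX i.
Implicit Type P : 'I_N -> 'I_M -> R.

Local Notation Mstar := (@Mstar R N M U h).

Definition max_ratio P (j : 'I_M) : R :=
  \big[Num.max/0]_i (posterior PX P i j / PX i).

Definition admissible_mass (j : 'I_M) : R := \sum_(i | (h <= U i j)%N) PX i.

Lemma posterior_ratioE P i j : posterior PX P i j / PX i = P i j / PY PX P j.
Proof. by rewrite /posterior mulrAC mulfK // gt_eqF. Qed.

Lemma max_ratioE P j : max_ratio P j = \big[Num.max/0]_i (P i j / PY PX P j).
Proof. by apply: eq_bigr => i _; rewrite posterior_ratioE. Qed.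

Lemma admissible_mass_gt0 j : (0 < admissible_mass j) = (j \in Yplus U h).
Proof.
rewrite inE; case: existsP => [[i0 hi0] | noi].
  rewrite /admissible_mass (bigD1 i0) //= ltr_wpDr ?PX_gt0 //.
  by apply: sumr_ge0 => i _; apply: ltW.
rewrite /admissible_mass big_pred0 ?ltxx // => i.
by apply/negP => hi; apply: noi; exists i.
Qed.

Lemma PY_Mstar j : PY PX Mstar j = (M - h + 1)%:R^-1 * admissible_mass j.
Proof.
rewrite /PY /admissible_mass mulr_sumr [RHS]big_mkcond /=; apply: eq_bigr => i _.
by rewrite /Mstar ltnNge; case: leqP => _ /=; rewrite ?mulr0 // mulrC.
Qed.

Lemma supportY_Mstar : (1 <= h <= M)%N -> supportY PX Mstar = Yplus U h.
Proof.
move=> hM; apply/setP => j.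
by rewrite inE PY_Mstar pmulr_rgt0 ?admissible_mass_gt0 // invr_gt0 ltr0n addn1.
Qed.

Lemma mechanism_Mstar : utility_rows_perm U -> (1 <= h <= M)%N -> mechanism Mstar.
Proof.
move=> Uperm hM; split=> [i j | i].
  by rewrite /Mstar; case: ifP => _; rewrite ?invr_ge0.
rewrite (eq_bigr (fun j => if (h <= U i j)%N then (M - h + 1)%:R^-1 else 0)); last first.
  by move=> j _; rewrite /Mstar ltnNge; case: (h <= U i j)%N.
rewrite -big_mkcond sumr_const (card_preim_perm (leq h) (Uperm i)).
rewrite count_iota_geq; last lia.
have -> : (1 + M - h = M - h + 1)%N by lia.
by rewrite -(mulr_natr _^-1) mulVf // pnatr_eq0 addn1.
Qed.

Lemma feasible_Mstar :
  utility_rows_perm U -> (1 <= h <= M)%N -> feasible PX U h Mstar.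
Proof.
move=> Uperm hM; split; [exact: mechanism_Mstar | | exact: supportY_Mstar].
by move=> i j hij; rewrite /Mstar hij.
Qed.

Lemma max_ratio_Mstar j : (1 <= h <= M)%N -> j \in Yplus U h ->
  max_ratio Mstar j = (admissible_mass j)^-1.
Proof.
move=> hM hj; have mass_gt0 : 0 < admissible_mass j by rewrite admissible_mass_gt0.
have ratioE i : (h <= U i j)%N -> Mstar i j / PY PX Mstar j = (admissible_mass j)^-1.
  move=> hi; rewrite PY_Mstar /Mstar ltnNge hi invfM mulrA mulfV ?mul1r //.
  by rewrite invr_eq0 pnatr_eq0 addn1.
rewrite max_ratioE; apply/le_anti/andP; split.
  apply: bigmax_le => [|i _]; first by rewrite invr_ge0 ltW.
  by case: (leqP h (U i j)) => [/ratioE -> // | hi]; rewrite /Mstar hi mul0r invr_ge0 ltW.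
by move: hj; rewrite inE => /existsP[i0 /ratioE <-]; apply: le_bigmax.
Qed.

Lemma max_ratio_ge P j :
  (forall i j, (U i j < h)%N -> P i j = 0) -> 0 < PY PX P j ->
  (admissible_mass j)^-1 <= max_ratio P j.
Proof.
move=> Pz PY_gt0.
have mass_bound : 1 <= admissible_mass j * max_ratio P j.
  have <- : \sum_i PX i * (P i j / PY PX P j) = 1.
    rewrite -(mulfV (lt0r_neq0 PY_gt0)) /PY mulr_suml.
    by apply: eq_bigr => i _; rewrite mulrA.
  rewrite max_ratioE; apply: sum_mul_le_mass_bigmax => [i | i]; first exact: ltW.
  by rewrite -ltnNge => /Pz ->; rewrite mul0r.
have mass_gt0 : 0 < admissible_mass j.
  rewrite lt_def sumr_ge0 => [|i _]; last exact: ltW.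
  by rewrite andbT; apply: contraTneq mass_bound => ->; rewrite mul0r ler10.
by rewrite -div1r ler_pdivrMr // mulrC.
Qed.

End OptimalMechanism.

Theorem theorem1 (R : realType) (N M : nat) (PX : 'I_N -> R)
    (U : 'I_N -> 'I_M -> nat) (h : nat) :
  full_support_pmf PX ->
  utility_rows_perm U ->
  (1 <= h <= M)%N ->
  feasible PX U h (@Mstar R N M U h) /\
  (forall P : 'I_N -> 'I_M -> R, feasible PX U h P ->
     max_PML PX (@Mstar R N M U h) <= max_PML PX P).
Proof.
move=> [PX_gt0 _] Uperm hM; split; first exact: feasible_Mstar.
move=> P [_ Pz suppP]; rewrite /max_PML supportY_Mstar // suppP.
apply: le_bigmax2 => j hj; rewrite /PML -!/(max_ratio _ _ _) max_ratio_Mstar //.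
have PY_gt0 : 0 < PY PX P j by move: hj; rewrite -suppP inE.
have mass_gt0 : 0 < admissible_mass PX U h j by rewrite admissible_mass_gt0.
have ratio_ge := max_ratio_ge PX_gt0 Pz PY_gt0.
rewrite ler_ln ?posrE ?invr_gt0 //.
by apply: lt_le_trans ratio_ge; rewrite invr_gt0.
Qed.
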